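(* Let $R$ be a commutative ring. If $(A,d)$ is a dg-Artinian acyclic differential graded $R$-algebra, then $(A,d)$ is dg-Noetherian.
   Context: A differential graded (dg) $R$-algebra $(A,d)$ is a $\mathbb{Z}$-graded $R$-algebra $A$ with an $R$-linear endomorphism $d$, homogeneous of degree $1$, with $d^2=0$ and $d(ab)=d(a)b+(-1)^{|a|}a\,d(b)$ for homogeneous $a,b$. It is acyclic if $\ker(d)=\operatorname{im}(d)$. A dg-ideal is a graded ideal $I$ with $d(I)\subseteq I$; $(A,d)$ is dg-Noetherian (resp. dg-Artinian) if it satisfies the ascending (resp. descending) chain condition on dg-ideals (i.e. on dg-submodules of $A$ viewed as a dg-module over itself). *)

From HB Require Import structures.
From mathcomp Require Import all_boot all_order all_algebra.
Set Implicit Arguments. Unset Strict Implicit. Unset Printing Implicit Defensive.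
Import Order.TTheory GRing.Theory Num.Theory.
Local Open Scope ring_scope.

Definition is_grading (R : comPzRingType) (A : algType R) (G : int -> A -> Prop) : Prop :=
  [/\
      (forall n, G n 0 /\ (forall (r : R) x y, G n x -> G n y -> G n (r *: x + y))),
      (forall x : A, exists (s : seq int) (f : int -> A),
          [/\ uniq s, (forall n, G n (f n)) & x = \sum_(n <- s) f n]),
      (forall (s : seq int) (f : int -> A), uniq s -> (forall n, G n (f n)) ->
          \sum_(n <- s) f n = 0 -> forall n, n \in s -> f n = 0),
      (forall m n (x y : A), G m x -> G n y -> G (m + n) (x * y))
    & G 0 1].

Definition is_dg_algebra (R : comPzRingType) (A : algType R)
    (G : int -> A -> Prop) (d : {linear A -> A}) : Prop :=
  [/\ is_grading G,
      (forall n x, G n x -> G (n + 1) (d x)),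
      (forall x, d (d x) = 0)
    & (forall m (a b : A), G m a ->
         d (a * b) = d a * b + (-1) ^+ `|m|%N * (a * d b))].

(* acyclic: ker d = im d (im d ⊆ ker d already follows from d^2 = 0,
   but we state both inclusions). *)
Definition dg_acyclic (R : comPzRingType) (A : algType R) (d : {linear A -> A}) : Prop :=
  forall x : A, d x = 0 <-> exists y, x = d y.

(* dg-ideals = dg-submodules of A viewed as a (left) dg-module over itself:
   left ideals that are R-submodules, graded (contain the homogeneous
   components of their elements) and stable under d. *)
Definition is_dg_ideal (R : comPzRingType) (A : algType R)
    (G : int -> A -> Prop) (d : {linear A -> A}) (I : A -> Prop) : Prop :=
  [/\ I 0 /\ (forall x y, I x -> I y -> I (x + y)),
      (forall (r : R) x, I x -> I (r *: x)),
      (forall (a x : A), I x -> I (a * x)),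
      (forall (s : seq int) (f : int -> A), uniq s -> (forall n, G n (f n)) ->
          I (\sum_(n <- s) f n) -> forall n, n \in s -> I (f n))
    & (forall x, I x -> I (d x))].

Definition dg_noetherian (R : comPzRingType) (A : algType R)
    (G : int -> A -> Prop) (d : {linear A -> A}) : Prop :=
  forall I : nat -> A -> Prop,
    (forall k, is_dg_ideal G d (I k)) ->
    (forall k x, I k x -> I k.+1 x) ->
    exists N, forall k, (N <= k)%N -> forall x, I k x <-> I N x.

Definition dg_artinian (R : comPzRingType) (A : algType R)
    (G : int -> A -> Prop) (d : {linear A -> A}) : Prop :=
  forall I : nat -> A -> Prop,
    (forall k, is_dg_ideal G d (I k)) ->
    (forall k x, I k.+1 x -> I k x) ->
    exists N, forall k, (N <= k)%N -> forall x, I k x <-> I N x.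

(* Acyclicity gives a homogeneous h of degree -1 with d h = 1, hence x = d (h x) + h (d x)
   for every x.  So a dg-ideal I is determined by its cycles, and K |-> A K inverts
   I |-> I /\ ker d between dg-ideals of A and graded left ideals of the graded ring
   Z(A) = ker d.  The dg-chain conditions on A thus become the chain conditions on graded
   left ideals of Z(A), and the theorem is the graded Hopkins-Levitzki theorem for Z(A):
   under DCC the Jacobson radical J is nilpotent (Nakayama) and Z(A)/J is a finite sum of
   simple modules (idempotents lift modulo J), so each layer J^k / J^(k+1) is semisimple
   with DCC, hence has ACC, and ACC climbs the filtration Z(A) >= J >= ... >= J^n = 0. *)

From HB Require Import structures.
From mathcomp Require Import all_boot all_order all_algebra.
From mathcomp Require Import boolp classical_sets.
Set Implicit Arguments. Unset Strict Implicit. Unset Printing Implicit Defensive.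
Import Order.TTheory GRing.Theory Num.Theory.
Local Open Scope ring_scope.
Local Open Scope classical_set_scope.

Lemma big_uniq_subset (V : nmodType) (I : eqType) (s t : seq I) (F : I -> V) :
  uniq s -> uniq t -> {subset s <= t} -> (forall i, i \notin s -> F i = 0) ->
  \sum_(i <- t) F i = \sum_(i <- s) F i.
Proof.
move=> s_uniq t_uniq st F0.
rewrite (bigID (mem s)) /= [X in _ + X]big1 ?addr0; last by move=> i /F0.
rewrite -big_filter; apply/perm_big/uniq_perm; first exact: filter_uniq.
  exact: s_uniq.
by move=> i; rewrite mem_filter andb_idr //; apply: st.
Qed.

Lemma chain_le T (C : nat -> set T) :
  (forall k, C k `<=` C k.+1) -> {homo C : m n / (m <= n)%N >-> m `<=` n}.
Proof.
by move=> Cup; apply: homo_leq => // [X|Y X Z]; [apply: subset_refl | apply: subset_trans].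
Qed.

(** * Homogeneous components *)

Section Grading.
Variables (R : comPzRingType) (A : algType R) (G : int -> A -> Prop).
Hypothesis gradedG : is_grading G.

Lemma homog0 n : G n 0.
Proof. by case: gradedG => /(_ n) []. Qed.

Lemma homogD n x y : G n x -> G n y -> G n (x + y).
Proof. by case: gradedG => /(_ n) [_ + _ _ _ _] Gx Gy => /(_ 1 x y Gx Gy); rewrite scale1r. Qed.

Lemma homogZ n (r : R) x : G n x -> G n (r *: x).
Proof.
case: gradedG => /(_ n) [G0 + _ _ _ _] Gx => /(_ r x 0 Gx G0).
by rewrite addr0.
Qed.

Lemma homogB n x y : G n x -> G n y -> G n (x - y).
Proof. by move=> Gx /(homogZ (-1)); rewrite scaleN1r; apply: homogD. Qed.

Lemma homogM m n x y : G m x -> G n y -> G (m + n) (x * y).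
Proof. by case: gradedG => _ _ _ + _; apply. Qed.

Lemma homog1 : G 0 1.
Proof. by case: gradedG. Qed.

Lemma homog_sum_eq0 s (f : int -> A) : uniq s -> (forall n, G n (f n)) ->
  \sum_(n <- s) f n = 0 -> forall n, n \in s -> f n = 0.
Proof. by case: gradedG => _ _ + _ _; apply. Qed.

Definition homog_decomposition x (p : seq int * (int -> A)) :=
  [/\ uniq p.1, forall n, G n (p.2 n) & x = \sum_(n <- p.1) p.2 n].

Lemma homog_decomposition_exists x : exists p, homog_decomposition x p.
Proof. by case: gradedG => _ /(_ x) [s [f]]; exists (s, f). Qed.

Definition hdecomp x := proj1_sig (cid (homog_decomposition_exists x)).
Definition hsupp x := (hdecomp x).1.
Definition hcomp n x := if n \in hsupp x then (hdecomp x).2 n else 0.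

Lemma hdecompP x : homog_decomposition x (hdecomp x).
Proof. exact: proj2_sig. Qed.

Lemma hsupp_uniq x : uniq (hsupp x).
Proof. by case: (hdecompP x). Qed.

Lemma hcomp_homog n x : G n (hcomp n x).
Proof. by rewrite /hcomp; case: ifP => _; [case: (hdecompP x) | apply: homog0]. Qed.

Lemma hcomp_notin_supp n x : n \notin hsupp x -> hcomp n x = 0.
Proof. by rewrite /hcomp => /negPf ->. Qed.

Lemma hcomp_sum x : x = \sum_(n <- hsupp x) hcomp n x.
Proof.
case: (hdecompP x) => _ _ {1}->; rewrite big_seq_cond [RHS]big_seq_cond.
by apply: eq_bigr => n /andP[nx _]; rewrite /hcomp nx.
Qed.

Lemma hcomp_sum_over x t : uniq t -> {subset hsupp x <= t} ->
  x = \sum_(n <- t) hcomp n x.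
Proof.
move=> t_uniq xt; rewrite (big_uniq_subset (s := hsupp x)) ?hsupp_uniq //; first exact: hcomp_sum.
by move=> n; apply: hcomp_notin_supp.
Qed.

Lemma hcomp_unique x s f : uniq s -> (forall n, G n (f n)) ->
  x = \sum_(n <- s) f n -> forall n, hcomp n x = if n \in s then f n else 0.
Proof.
move=> s_uniq Gf xE.
pose t := undup (hsupp x ++ s); have t_uniq : uniq t by apply: undup_uniq.
pose f' n := if n \in s then f n else 0.
have Gf' n : G n (f' n) by rewrite /f'; case: ifP => _; [apply: Gf | apply: homog0].
have xt : x = \sum_(n <- t) hcomp n x.
  by apply: hcomp_sum_over => // n nx; rewrite mem_undup mem_cat nx.
have f't : \sum_(n <- t) f' n = \sum_(n <- s) f n.
  rewrite (big_uniq_subset (s := s)) //.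
  - by apply: eq_big_seq => n; rewrite /f' => ->.
  - by move=> n ns; rewrite mem_undup mem_cat ns orbT.
  - by move=> n /negPf; rewrite /f' => ->.
have diff0 : \sum_(n <- t) (hcomp n x - f' n) = 0.
  by rewrite sumrB -xt f't -xE subrr.
move=> n; have [nt|] := boolP (n \in t).
  apply/eqP; rewrite -subr_eq0; apply/eqP.
  apply: (homog_sum_eq0 (s := t) (f := fun m => hcomp m x - f' m)) => // m.
  by apply: homogB; [apply: hcomp_homog | apply: Gf'].
rewrite mem_undup mem_cat negb_or => /andP[nx /negPf ns].
by rewrite hcomp_notin_supp // ns.
Qed.

Lemma hcomp0 n : hcomp n 0 = 0.
Proof. by rewrite (@hcomp_unique 0 [::] (fun=> 0)) ?big_nil // => m; apply: homog0. Qed.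

Lemma hcompD n x y : hcomp n (x + y) = hcomp n x + hcomp n y.
Proof.
pose t := undup (hsupp x ++ hsupp y); have t_uniq : uniq t by apply: undup_uniq.
rewrite (@hcomp_unique _ t (fun m => hcomp m x + hcomp m y)) //.
- case: ifP => //; rewrite mem_undup mem_cat => /negbT; rewrite negb_or.
  by case/andP=> nx ny; rewrite !hcomp_notin_supp ?addr0.
- by move=> m; apply: homogD; apply: hcomp_homog.
rewrite big_split /= -!hcomp_sum_over // => m mx; rewrite mem_undup mem_cat mx ?orbT //.
Qed.

Lemma hcomp_homog_eq m n x : G m x -> hcomp n x = if n == m then x else 0.
Proof.
move=> Gx; rewrite (@hcomp_unique _ [:: m] (fun n => if n == m then x else 0)) //.
- by rewrite inE; case: eqP.
- by move=> k; case: eqP => [->|_] //; apply: homog0.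
by rewrite big_seq1 eqxx.
Qed.

Lemma hcomp_id n x : G n x -> hcomp n x = x.
Proof. by move=> Gx; rewrite (hcomp_homog_eq _ Gx) eqxx. Qed.

Lemma hcomp_mulr e n x y : G e y -> hcomp n (x * y) = hcomp (n - e) x * y.
Proof.
move=> Gy; rewrite (@hcomp_unique _ [seq m + e | m <- hsupp x]
                      (fun n => hcomp (n - e) x * y)).
- case: ifP => // /negbT ne; rewrite hcomp_notin_supp ?mul0r //.
  by apply: contra ne => nex; apply/mapP; exists (n - e); rewrite ?subrK.
- by rewrite map_inj_uniq ?hsupp_uniq //; apply: addIr.
- by move=> k; have := homogM (hcomp_homog (k - e) x) Gy; rewrite subrK.
by rewrite big_map {1}(hcomp_sum x) mulr_suml; apply: eq_bigr => m _; rewrite addrK.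
Qed.

Definition homog x := exists n, G n x.

Section Differential.
Variable d : {linear A -> A}.
Hypotheses (d_homog : forall n x, G n x -> G (n + 1) (d x))
  (dK : forall x, d (d x) = 0)
  (d_mul : forall m a b, G m a -> d (a * b) = d a * b + (-1) ^+ `|m|%N * (a * d b)).

Lemma hcomp_d n x : hcomp n (d x) = d (hcomp (n - 1) x).
Proof.
rewrite (@hcomp_unique _ [seq m + 1 | m <- hsupp x] (fun n => d (hcomp (n - 1) x))).
- case: ifP => // /negbT ne; rewrite hcomp_notin_supp ?linear0 //.
  by apply: contra ne => nex; apply/mapP; exists (n - 1); rewrite ?subrK.
- by rewrite map_inj_uniq ?hsupp_uniq //; apply: addIr.
- by move=> k; have := d_homog (hcomp_homog (k - 1) x); rewrite subrK.
by rewrite big_map {1}(hcomp_sum x) linear_sum; apply: eq_bigr => m _; rewrite addrK.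
Qed.

Lemma d1 : d 1 = 0.
Proof.
have := d_mul 1 homog1; rewrite expr0 !mul1r !mulr1 => d1E.
by apply: (@addrI _ (d 1)); rewrite addr0 -d1E.
Qed.

Definition cycles : set A := [set x | d x = 0].

Lemma cycles0 : cycles 0. Proof. exact: linear0. Qed.
Lemma cycles1 : cycles 1. Proof. exact: d1. Qed.
Lemma cycles_d x : cycles (d x). Proof. exact: dK. Qed.

Lemma cyclesD x y : cycles x -> cycles y -> cycles (x + y).
Proof. by rewrite /cycles /= linearD => -> ->; rewrite addr0. Qed.

Lemma cyclesN x : cycles x -> cycles (- x).
Proof. by rewrite /cycles /= linearN => ->; rewrite oppr0. Qed.

Lemma cyclesB x y : cycles x -> cycles y -> cycles (x - y).
Proof. by move=> zx /cyclesN; apply: cyclesD. Qed.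

Lemma d_mulr_cycle a c : cycles c -> d (a * c) = d a * c.
Proof.
move=> zc; rewrite {1 2}(hcomp_sum a) mulr_suml !linear_sum mulr_suml.
by apply: eq_bigr => m _; rewrite (d_mul _ (hcomp_homog m a)) zc !mulr0 addr0.
Qed.

Lemma cyclesM a c : cycles a -> cycles c -> cycles (a * c).
Proof. by move=> za zc; rewrite /cycles /= d_mulr_cycle // za mul0r. Qed.

Lemma cycles_hcomp n x : cycles x -> cycles (hcomp n x).
Proof. by move=> zx; rewrite /cycles /= -[n](addrK 1) -hcomp_d zx hcomp0. Qed.

(** * Graded left ideals of the ring Z(A) = ker d of cycles *)

Definition zideal (K : set A) :=
  [/\ K 0, (forall x y, K x -> K y -> K (x + y)),
      (forall a x, cycles a -> K x -> K (a * x)),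
      (forall n x, K x -> K (hcomp n x)) & K `<=` cycles].

Section ZidealTheory.
Variable K : set A.
Hypothesis idK : zideal K.

Lemma zideal0 : K 0. Proof. by case: idK. Qed.
Lemma zidealD x y : K x -> K y -> K (x + y). Proof. by case: idK => _ + _ _ _; apply. Qed.
Lemma zidealMl a x : cycles a -> K x -> K (a * x). Proof. by case: idK => _ _ + _ _; apply. Qed.
Lemma zideal_hcomp n x : K x -> K (hcomp n x). Proof. by case: idK => _ _ _ + _; apply. Qed.
Lemma zideal_sub_cycles : K `<=` cycles. Proof. by case: idK. Qed.

Lemma zidealN x : K x -> K (- x).
Proof. by move=> Kx; rewrite -mulN1r; apply: zidealMl => //; apply/cyclesN/cycles1. Qed.

Lemma zidealB x y : K x -> K y -> K (x - y).
Proof. by move=> Kx /zidealN; apply: zidealD. Qed.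

Lemma zideal_sum (I : eqType) (s : seq I) (F : I -> A) :
  (forall i, i \in s -> K (F i)) -> K (\sum_(i <- s) F i).
Proof.
elim: s => [|i s IHs] Fs; first by rewrite big_nil; apply: zideal0.
rewrite big_cons; apply: zidealD; first by apply: Fs; rewrite mem_head.
by apply: IHs => j js; apply: Fs; rewrite inE js orbT.
Qed.

Lemma zideal_of_hcomp x : (forall n, K (hcomp n x)) -> K x.
Proof. by move=> Kx; rewrite (hcomp_sum x); apply: zideal_sum. Qed.

End ZidealTheory.

Inductive sum_closure (P : set A) : set A :=
  | sum_closure0 : sum_closure P 0
  | sum_closure_gen x : P x -> sum_closure P x
  | sum_closureD x y : sum_closure P x -> sum_closure P y -> sum_closure P (x + y).

Lemma sum_closure_sum P (I : eqType) (s : seq I) (F : I -> A) :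
  (forall i, i \in s -> sum_closure P (F i)) -> sum_closure P (\sum_(i <- s) F i).
Proof.
elim: s => [|i s IHs] Fs; first by rewrite big_nil; apply: sum_closure0.
rewrite big_cons; apply: sum_closureD; first by apply: Fs; rewrite mem_head.
by apply: IHs => j js; apply: Fs; rewrite inE js orbT.
Qed.

Lemma sum_closure_min P K : zideal K -> P `<=` K -> sum_closure P `<=` K.
Proof. by move=> idK PK x; elim=> [|//|y z _ Ky _ Kz]; [apply: zideal0 | apply: zidealD]. Qed.

Lemma sum_closure_map P (f : A -> A) : f 0 = 0 -> {morph f : x y / x + y} ->
  (forall z, P z -> sum_closure P (f z)) ->
  forall x, sum_closure P x -> sum_closure P (f x).
Proof.
move=> f0 fD fP x; elim=> [|//|y z _ Py _ Pz]; last by rewrite fD; apply: sum_closureD.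
by rewrite f0; apply: sum_closure0.
Qed.

Lemma zideal_sum_closure P : P `<=` cycles ->
    (forall a z, cycles a -> P z -> sum_closure P (a * z)) ->
    (forall n z, P z -> sum_closure P (hcomp n z)) ->
  zideal (sum_closure P).
Proof.
move=> Pcyc PM Phcomp; split.
- exact: sum_closure0.
- exact: sum_closureD.
- move=> a x za; apply: (sum_closure_map (f := *%R a)) => [||z Pz].
  + exact: mulr0.
  + exact: mulrDr.
  + exact: PM.
- move=> n x; apply: (sum_closure_map (f := hcomp n)) => [||z Pz].
  + exact: hcomp0.
  + exact: hcompD.
  + exact: Phcomp.
by move=> x; elim=> [|y /Pcyc|y z _ zy _ zz]; [apply: cycles0 | | apply: cyclesD].
Qed.

Lemma zidealT : zideal cycles.
Proof.
split; [exact: cycles0 | exact: cyclesD | | | by []].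
- by move=> a x za zx; apply: cyclesM.
- by move=> n x; apply: cycles_hcomp.
Qed.

Lemma zideal_zero : zideal [set 0].
Proof.
split=> //= [x y -> ->|a x _ ->|n x ->|x ->]; rewrite ?addr0 ?mulr0 ?hcomp0 //.
exact: cycles0.
Qed.

Lemma zidealI U V : zideal U -> zideal V -> zideal (U `&` V).
Proof.
move=> idU idV; split.
- by split; apply: zideal0.
- by move=> x y [Ux Vx] [Uy Vy]; split; apply: zidealD.
- by move=> a x za [Ux Vx]; split; apply: zidealMl.
- by move=> n x [Ux Vx]; split; apply: zideal_hcomp.
by move=> x [Ux _]; apply: zideal_sub_cycles Ux.
Qed.

Definition ideal_add (U V : set A) : set A := [set a + b | a in U & b in V].

Lemma zideal_add U V : zideal U -> zideal V -> zideal (ideal_add U V).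
Proof.
move=> idU idV; split.
- by exists 0; [apply: zideal0 | exists 0; [apply: zideal0 | rewrite addr0]].
- move=> _ _ [a Ua [b Vb <-]] [a' Ua' [b' Vb' <-]].
  exists (a + a'); first exact: zidealD.
  by exists (b + b'); [apply: zidealD | rewrite addrACA].
- move=> c _ zc [a Ua [b Vb <-]].
  by exists (c * a); [apply: zidealMl | exists (c * b); [apply: zidealMl | rewrite mulrDr]].
- move=> n _ [a Ua [b Vb <-]].
  exists (hcomp n a); first exact: zideal_hcomp.
  by exists (hcomp n b); [apply: zideal_hcomp | rewrite hcompD].
move=> _ [a Ua [b Vb <-]].
by apply: cyclesD; [apply: zideal_sub_cycles Ua | apply: zideal_sub_cycles Vb].
Qed.

Lemma ideal_addl U V : zideal V -> U `<=` ideal_add U V.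
Proof. by move=> idV x Ux; exists x => //; exists 0; [apply: zideal0 | rewrite addr0]. Qed.

Lemma ideal_addr U V : zideal U -> V `<=` ideal_add U V.
Proof. by move=> idU x Vx; exists 0; [apply: zideal0 | exists x => //; rewrite add0r]. Qed.

Lemma ideal_add_sub U V W : zideal W -> U `<=` W -> V `<=` W -> ideal_add U V `<=` W.
Proof. by move=> idW UW VW _ [a /UW Wa [b /VW Wb <-]]; apply: zidealD. Qed.

Lemma zideal_mulr X t : zideal X -> homog t -> cycles t -> zideal [set b * t | b in X].
Proof.
move=> idX [k Gt] zt; split.
- by exists 0; [apply: zideal0 | rewrite mul0r].
- move=> _ _ [b Xb <-] [b' Xb' <-].
  by exists (b + b'); [apply: zidealD | rewrite mulrDl].
- by move=> c _ zc [b Xb <-]; exists (c * b); [apply: zidealMl | rewrite mulrA].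
- move=> n _ [b Xb <-]; exists (hcomp (n - k) b); first exact: zideal_hcomp.
  by rewrite (hcomp_mulr _ _ Gt).
by move=> _ [b Xb <-]; apply: cyclesM => //; apply: zideal_sub_cycles Xb.
Qed.

Definition zprincipal y : set A := [set a * y | a in cycles].

Lemma zideal_principal y : homog y -> cycles y -> zideal (zprincipal y).
Proof. exact: zideal_mulr zidealT. Qed.

Lemma principal_self y : zprincipal y y.
Proof. by exists 1; [apply: cycles1 | apply: mul1r]. Qed.

Lemma principal_sub K y : zideal K -> K y -> zprincipal y `<=` K.
Proof. by move=> idK Ky _ [a za <-]; apply: zidealMl. Qed.

Definition zprod (X Y : set A) : set A :=
  sum_closure [set x * y | x in X `&` homog & y in Y `&` homog].

Lemma zideal_prod X Y : zideal X -> zideal Y -> zideal (zprod X Y).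
Proof.
move=> idX idY; apply: zideal_sum_closure.
- move=> _ [x [Xx _] [y [Yy _] <-]].
  by apply: cyclesM; [apply: zideal_sub_cycles Xx | apply: zideal_sub_cycles Yy].
- move=> a _ za [x [Xx [p Gx]] [y Yhy <-]].
  rewrite (hcomp_sum a) mulr_suml; apply: sum_closure_sum => m _.
  apply: sum_closure_gen; exists (hcomp m a * x); last by exists y; rewrite // mulrA.
  split; first by apply: zidealMl => //; apply: cycles_hcomp.
  by exists (m + p); apply: homogM => //; apply: hcomp_homog.
move=> n _ [x [Xx [p Gx]] [y [Yy [q Gy]] <-]].
rewrite (hcomp_homog_eq _ (homogM Gx Gy)); case: eqP => _; last exact: sum_closure0.
by apply: sum_closure_gen; exists x; [split; last exists p | exists y; [split; last exists q|]].
Qed.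

Lemma zprod_mem X Y x y : zideal X -> zideal Y -> X x -> Y y -> zprod X Y (x * y).
Proof.
move=> idX idY Xx Yy; rewrite (hcomp_sum x) (hcomp_sum y) mulr_suml.
apply: sum_closure_sum => m _; rewrite mulr_sumr; apply: sum_closure_sum => k _.
apply: sum_closure_gen; exists (hcomp m x).
  by split; [apply: zideal_hcomp | exists m; apply: hcomp_homog].
by exists (hcomp k y); first by split; [apply: zideal_hcomp | exists k; apply: hcomp_homog].
Qed.

Lemma zprod_subr X Y : zideal Y -> X `<=` cycles -> zprod X Y `<=` Y.
Proof.
move=> idY Xz; apply: sum_closure_min => // _ [x [/Xz zx _] [y [Yy _] <-]].
exact: zidealMl.
Qed.

(** * The radical *)

(* V/U is simple or zero. *)
Definition atom (U V : set A) :=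
  forall W, zideal W -> U `<=` W -> W `<=` V -> W `<=` U \/ V `<=` W.

(* The Jacobson radical of Z(A): the cycles annihilating every simple subquotient V/U. *)
Definition radical : set A := [set x | cycles x /\
  forall U V, zideal U -> zideal V -> U `<=` V -> atom U V -> forall v, V v -> U (x * v)].

Lemma radical_sub_cycles : radical `<=` cycles.
Proof. by move=> x []. Qed.

Lemma zideal_radical : zideal radical.
Proof.
split.
- by split=> [|U V idU _ _ _ v _]; [apply: cycles0 | rewrite mul0r; apply: zideal0].
- move=> x y [zx Jx] [zy Jy]; split=> [|U V idU idV UV aUV v Vv]; first exact: cyclesD.
  by rewrite mulrDl; apply: zidealD => //; [apply: (Jx U V) | apply: (Jy U V)].
- move=> a x za [zx Jx]; split=> [|U V idU idV UV aUV v Vv]; first exact: cyclesM.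
  by rewrite -mulrA; apply: zidealMl => //; apply: (Jx U V).
- move=> n x [zx Jx]; split=> [|U V idU idV UV aUV v Vv]; first exact: cycles_hcomp.
  rewrite (hcomp_sum v) mulr_sumr; apply: zideal_sum => // k _.
  rewrite -[n](addrK k) -(hcomp_mulr _ _ (hcomp_homog k v)).
  by apply: zideal_hcomp => //; apply: (Jx U V) => //; apply: zideal_hcomp.
exact: radical_sub_cycles.
Qed.

Lemma radical_mulr x b : radical x -> cycles b -> radical (x * b).
Proof.
move=> [zx Jx] zb; split=> [|U V idU idV UV aUV v Vv]; first exact: cyclesM.
by rewrite -mulrA; apply: (Jx U V) => //; apply: zidealMl.
Qed.

Lemma zideal_bigcup (F : set (set A)) : total_on F subset ->
    (forall X, F X -> X !=set0 -> zideal X) -> \bigcup_(X in F) X !=set0 ->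
  zideal (\bigcup_(X in F) X).
Proof.
move=> Ftot Fid [z [X0 FX0 X0z]].
have idX0 : zideal X0 by apply: Fid FX0 _; exists z.
have mem x : (\bigcup_(X in F) X) x -> exists2 X, F X & X x /\ zideal X.
  by move=> [X FX Xx]; exists X => //; split => //; apply: Fid FX _; exists x.
split.
- by exists X0 => //; apply: zideal0.
- move=> x y /mem [X FX [Xx idX]] /mem [Y FY [Yy idY]].
  have [XY|YX] := Ftot X Y FX FY.
    by exists Y => //; apply: zidealD => //; apply: XY.
  by exists X => //; apply: zidealD => //; apply: YX.
- by move=> a x za /mem [X FX [Xx idX]]; exists X => //; apply: zidealMl.
- by move=> n x /mem [X FX [Xx idX]]; exists X => //; apply: zideal_hcomp.
by move=> x /mem [X FX [Xx idX]]; apply: zideal_sub_cycles Xx.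
Qed.

Lemma exists_maximal_subideal y : homog y -> cycles y -> y <> 0 ->
  exists M, [/\ zideal M, M `<=` zprincipal y, ~ M y & atom M (zprincipal y)].
Proof.
move=> hy zy y0.
(* Zorn's lemma: chains may contain the empty set, whose union is no ideal. *)
pose P X := [/\ X `<=` zprincipal y, ~ X y & X !=set0 -> zideal X].
have [M [[MZ nMy Mid] Mmax]] : exists M, P M /\ forall B, M `<` B -> ~ P B.
  apply: Zorn_bigcup => F FP Ftot; split.
  - by move=> z [X FX Xz]; case: (FP X FX) => + _ _; apply.
  - by move=> [X FX Xy]; case: (FP X FX) => _ + _; apply.
  by apply: zideal_bigcup => // X FX; case: (FP X FX).
have idM : zideal M.
  apply: Mid; apply: contrapT => M0; apply: (Mmax [set 0]).
    by split=> [z Mz|/(_ 0 erefl) M00]; [case: M0; exists z | case: M0; exists 0].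
  split=> [_ ->|/esym //|_]; last exact: zideal_zero.
  by exists 0; [apply: cycles0 | apply: mul0r].
exists M; split=> // W idW MW WZ; have [Wy|nWy] := pselect (W y).
  by right; apply: principal_sub.
by left; apply: contrapT => nWM; apply: (Mmax W).
Qed.

Lemma radical_nakayama x j : homog x -> cycles x -> radical j -> x = j * x -> x = 0.
Proof.
move=> hx zx [_ Jj] xE; apply: contrapT => x0.
have [M [idM MZ nMx aM]] := exists_maximal_subideal hx zx x0.
apply: nMx; rewrite xE; apply: (Jj M (zprincipal x)) => //; last exact: principal_self.
exact: zideal_principal.
Qed.

Lemma exists_nonradical_prod T : zideal T -> ~ T `<=` radical ->
  exists a t, [/\ T a, T t, homog a, homog t & ~ radical (a * t)].
Proof.
move=> idT; apply: contra_notP => noprod x Tx.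
have Jprod a t : T a -> T t -> homog a -> homog t -> radical (a * t).
  by move=> Ta Tt ha ht; apply: contrapT => nJ; apply: noprod; exists a, t.
have zT := zideal_sub_cycles idT.
split=> [|U V idU idV UV aUV v Vv]; first exact: zT.
pose W := ideal_add (zprod T V) U.
have idW : zideal W by apply: zideal_add => //; apply: zideal_prod.
have WV : W `<=` V by apply: ideal_add_sub => //; apply: zprod_subr.
have [WU|VW] := aUV W idW (ideal_addr (zideal_prod idT idV)) WV.
  by apply/WU/ideal_addl => //; apply: zprod_mem.
have [p Tp [u Uu <-]] := VW v Vv.
rewrite mulrDr; apply: zidealD => //; last by apply: zidealMl => //; apply: zT.
elim: Tp => [|_ [t [Tt ht] [w [Vw hw] <-]]|p1 p2 _ Up1 _ Up2].
- by rewrite mulr0; apply: zideal0.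
- rewrite (hcomp_sum x) mulr_suml; apply: zideal_sum => // m _.
  have [_ Jm] := Jprod _ _ (zideal_hcomp idT m Tx) Tt
    (ex_intro _ m (hcomp_homog m x)) ht.
  by rewrite mulrA; apply: (Jm U V).
by rewrite mulrDr; apply: zidealD.
Qed.

Lemma radical_of_mulr T a t b : zideal T -> radical `<=` T -> atom radical T ->
    homog t -> T a -> T t -> ~ radical (a * t) ->
  T b -> radical (b * t) -> radical b.
Proof.
move=> idT JT aT [k Gt] Ta Tt naJt; have zT := zideal_sub_cycles idT.
pose X := [set b | T b /\ radical (b * t)].
have idX : zideal X.
  split=> [|x y [Tx Jx] [Ty Jy]|c x zc [Tx Jx]|n x [Tx Jx]|x [/zT //]].
  - by split; [apply: zideal0 | rewrite mul0r; apply: (zideal0 zideal_radical)].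
  - by split; [apply: zidealD | rewrite mulrDl; apply: (zidealD zideal_radical)].
  - by split; [apply: zidealMl | rewrite -mulrA; apply: (zidealMl zideal_radical)].
  split; first exact: zideal_hcomp.
  by rewrite -[n](addrK k) -(hcomp_mulr _ _ Gt); apply: (zideal_hcomp zideal_radical).
have JX : radical `<=` X.
  by move=> c Jc; split; [apply: JT | apply: radical_mulr => //; apply: zT].
have [XJ|TX] := aT _ idX JX (fun c => @proj1 _ _); first by move=> Tb Jbt; apply: XJ.
by have [] := TX a Ta.
Qed.

Lemma exists_idempotent_mod_radical T : zideal T -> radical `<=` T ->
    ~ T `<=` radical -> atom radical T ->
  exists e, [/\ T e, G 0 e, ~ radical e & radical (e * e - e)].
Proof.
move=> idT JT nTJ aT; have zT := zideal_sub_cycles idT.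
have [a [t [Ta Tt ha [k Gt] naJt]]] := exists_nonradical_prod idT nTJ.
have idTt := zideal_mulr idT (ex_intro _ k Gt) (zT t Tt).
have TtT : [set b * t | b in T] `<=` T by move=> _ [b Tb <-]; apply: zidealMl => //; apply: zT.
(* T = T t + J as T t is not inside J, so t = e t + j; the degree-0 part e0 of e
   satisfies (e0 e0 - e0) t \in J, whence e0 e0 - e0 \in J. *)
have [|TTt] := aT _ (zideal_add idTt zideal_radical) (ideal_addr idTt)
  (ideal_add_sub idT TtT JT).
  move=> /(_ (a * t)) Jat; case: naJt.
  by apply/Jat/ideal_addl; [apply: zideal_radical | exists a].
have [_ [e Te <-] [j Jj tE]] := TTt t Tt.
pose e0 := hcomp 0 e; pose j' := hcomp k j.
have e0tE : e0 * t = t - j'.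
  have := congr1 (hcomp k) tE.
  rewrite hcompD (hcomp_mulr _ _ Gt) subrr (hcomp_id Gt) => tkE.
  by rewrite -{2}tkE addrK.
have Te0 : T e0 by apply: zideal_hcomp.
have Jj' : radical j' by apply: (zideal_hcomp zideal_radical).
exists e0; split=> //; first exact: hcomp_homog.
  move=> Je0; apply: naJt; apply: (zidealMl zideal_radical); first exact: zT.
  have -> : t = e0 * t + j' by rewrite e0tE subrK.
  apply: (zidealD zideal_radical) => //.
  by apply: radical_mulr => //; apply: zT.
apply: (radical_of_mulr idT JT aT (ex_intro _ k Gt) Ta Tt naJt).
  by apply: zidealB => //; apply: zidealMl => //; apply: zT.
rewrite mulrBl -mulrA e0tE mulrBr e0tE addrAC subrr add0r.
by apply: (zidealN zideal_radical); apply: (zidealMl zideal_radical) => //; apply: zT.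
Qed.

Lemma atom_radical_principal T e : zideal T -> radical `<=` T -> atom radical T ->
  T e -> G 0 e -> ~ radical e -> T = ideal_add (zprincipal e) radical.
Proof.
move=> idT JT aT Te Ge nJe; have zT := zideal_sub_cycles idT.
have idE : zideal (ideal_add (zprincipal e) radical).
  by apply: zideal_add zideal_radical; apply: zideal_principal; [exists 0 | apply: zT].
have ET : ideal_add (zprincipal e) radical `<=` T.
  by apply: ideal_add_sub => //; apply: principal_sub.
apply/seteqP; split => //.
have [EJ|//] := aT _ idE (ideal_addr (zideal_principal (ex_intro _ 0 Ge) (zT e Te))) ET.
by case: nJe; apply/EJ/ideal_addl; [apply: zideal_radical | apply: principal_self].
Qed.

Lemma exists_idempotent_complement K e : zideal K -> radical `<=` K -> K e -> G 0 e ->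
    ~ radical e -> radical (e * e - e) ->
  exists K', [/\ zideal K', radical `<=` K', K' `<=` K,
                 K `<=` ideal_add (zprincipal e) K' & ~ K' e].
Proof.
move=> idK JK Ke Ge nJe Jee; have zK := zideal_sub_cycles idK.
have idJ := zideal_radical; have ze := zK e Ke.
have G1e : G 0 (1 - e) by apply: homogB => //; apply: homog1.
exists [set k * (1 - e) + j | k in K & j in radical]; split.
- split.
  + by exists 0; [apply: zideal0 | exists 0; [apply: (zideal0 idJ) | rewrite mul0r addr0]].
  + move=> _ _ [k1 K1 [j1 J1 <-]] [k2 K2 [j2 J2 <-]].
    exists (k1 + k2); first exact: zidealD.
    by exists (j1 + j2); [apply: (zidealD idJ) | rewrite mulrDl addrACA].
  + move=> c _ zc [k1 K1 [j1 J1 <-]]; exists (c * k1); first exact: zidealMl.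
    by exists (c * j1); [apply: (zidealMl idJ) | rewrite [RHS]mulrDr mulrA].
  + move=> n _ [k1 K1 [j1 J1 <-]]; exists (hcomp n k1); first exact: zideal_hcomp.
    exists (hcomp n j1); first exact: (zideal_hcomp idJ).
    by rewrite hcompD (hcomp_mulr _ _ G1e) subr0.
  move=> _ [k1 /zK K1 [j1 /radical_sub_cycles J1 <-]]; apply: cyclesD => //.
  by apply: cyclesM => //; apply: cyclesB => //; apply: cycles1.
- by move=> j Jj; exists 0; [apply: zideal0 | exists j; rewrite ?mul0r ?add0r].
- move=> _ [k1 K1 [j1 /JK J1 <-]]; apply: zidealD => //.
  by rewrite mulrBr mulr1; apply: zidealB => //; apply: zidealMl => //; apply: zK.
- move=> x Kx; exists (x * e); first by exists x; [apply: zK | ].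
  exists (x * (1 - e)); last by rewrite mulrBr mulr1 addrC subrK.
  by exists x => //; exists 0; [apply: zideal0 | rewrite addr0].
move=> [k1 K1 [j1 J1 e1E]]; apply: nJe.
have Jee2 : radical (e * e).
  rewrite -{1}e1E mulrDl -mulrA mulrBl mul1r -opprB mulrN.
  apply: (zidealD idJ); last exact: radical_mulr.
  by apply: (zidealN idJ); apply: (zidealMl idJ) => //; apply: zK.
by rewrite -(subKr (e * e) e); apply: zidealB.
Qed.

Definition principal_sum (B : set A) (ys : seq A) :=
  foldr (fun y S => ideal_add (zprincipal y) S) B ys.

Lemma principal_sumS B B' ys : B `<=` B' -> principal_sum B ys `<=` principal_sum B' ys.
Proof. by move=> BB'; elim: ys => //= y ys IHys; apply: image2_subset. Qed.

Lemma principal_sum_sub B ys W : zideal W -> B `<=` W ->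
  (forall y, y \in ys -> zprincipal y `<=` W) -> principal_sum B ys `<=` W.
Proof.
move=> idW BW; elim: ys => //= y ys IHys yW.
apply: ideal_add_sub => //; first by apply: yW; rewrite mem_head.
by apply: IHys => z zys; apply: yW; rewrite inE zys orbT.
Qed.

Lemma principal_sum_pull B B' Q ys : B `<=` ideal_add Q B' ->
  principal_sum B ys `<=` ideal_add Q (principal_sum B' ys).
Proof.
move=> BQ; elim: ys => //= y ys IHys _ [a Ya [b /IHys [c Qc [b' B'b' <-]] <-]].
by exists c => //; exists (a + b'); [exists a => //; exists b' | rewrite addrCA].
Qed.

Lemma principal_sum_mulr I ys c z : (forall j, radical j -> I (j * c)) ->
  principal_sum radical ys z -> principal_sum I [seq y * c | y <- ys] (z * c).
Proof.
move=> JcI; elim: ys z => [|y ys IHys] z /=; first exact: JcI.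
move=> [_ [a za <-] [b /IHys Ib <-]].
by exists (a * (y * c)); [exists a | exists (b * c); rewrite // mulrDl mulrA].
Qed.

Definition simple_mod_radical y :=
  [/\ homog y, cycles y & atom radical (ideal_add (zprincipal y) radical)].

Lemma atom_principal_mulr I y c : zideal I -> simple_mod_radical y -> homog c -> cycles c ->
  (forall j, radical j -> I (j * c)) -> atom I (ideal_add (zprincipal (y * c)) I).
Proof.
move=> idI [[ey Gy] zy aY] [n Gc] zc JcI K idK IK KQ.
have idJ := zideal_radical.
have idZy := zideal_principal (ex_intro _ ey Gy) zy.
have idY : zideal (ideal_add (zprincipal y) radical) by apply: zideal_add.
have idX : zideal [set b | ideal_add (zprincipal y) radical b /\ K (b * c)].
  split=> [|a b [Ya Ka] [Yb Kb]|a b za [Yb Kb]|m b [Yb Kb]|b [/(zideal_sub_cycles idY) //]].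
  - by split; [apply: zideal0 | rewrite mul0r; apply: zideal0].
  - by split; [apply: zidealD | rewrite mulrDl; apply: zidealD].
  - by split; [apply: zidealMl | rewrite -mulrA; apply: zidealMl].
  split; first exact: zideal_hcomp.
  by rewrite -[m](addrK n) -(hcomp_mulr _ _ Gc); apply: zideal_hcomp.
have JX : radical `<=` [set b | ideal_add (zprincipal y) radical b /\ K (b * c)].
  by move=> j Jj; split; [apply: ideal_addr | apply/IK/JcI].
have [XJ|YX] := aY _ idX JX (fun b => @proj1 _ _).
  left => k Kk; have [_ [a za <-] [i Ii kE]] := KQ k Kk.
  rewrite -kE; apply: zidealD => //; rewrite mulrA; apply/JcI/XJ.
  split; first by apply: ideal_addl => //; exists a.
  rewrite -mulrA -(addrK i (a * (y * c))) kE.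
  by apply: zidealB => //; apply: IK.
right => _ [_ [a za <-] [i Ii <-]]; apply: zidealD => //; last exact: IK.
apply: zidealMl => //; have [] := YX y => //.
by apply: ideal_addl => //; apply: principal_self.
Qed.

Fixpoint radical_pow k : set A :=
  if k is k'.+1 then zprod (radical_pow k') radical else cycles.

Lemma zideal_radical_pow k : zideal (radical_pow k).
Proof. by elim: k => [|k IHk] /=; [apply: zidealT | apply: zideal_prod zideal_radical]. Qed.

Lemma radical_pow_mulr k x b : radical_pow k x -> cycles b -> radical_pow k (x * b).
Proof.
elim: k x => [|k IHk] x /=; first exact: cyclesM.
move=> + zb; elim=> [|_ [y [ky _] [j [Jj _] <-]]|y z _ IHy _ IHz].
- by rewrite mul0r; apply: sum_closure0.
- rewrite -mulrA; apply: zprod_mem => //; first exact: zideal_radical_pow.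
    exact: zideal_radical.
  exact: radical_mulr.
by rewrite mulrDl; apply: sum_closureD.
Qed.

Lemma radical_pow_succ k : radical_pow k.+1 `<=` radical_pow k.
Proof.
apply: sum_closure_min; first exact: zideal_radical_pow.
move=> _ [y [ky _] [j [/radical_sub_cycles zj _] <-]].
exact: radical_pow_mulr.
Qed.

Lemma radical_pow_mull k j x : radical j -> radical_pow k x -> radical_pow k.+1 (j * x).
Proof.
have idJ := zideal_radical; move=> Jj; elim: k x => [|k IHk] x kx.
  rewrite -[j * x]mul1r; apply: zprod_mem => //; first exact: zidealT.
    exact: cycles1.
  exact: radical_mulr.
elim: kx => [|_ [y [ky _] [j' [Jj' _] <-]]|y z _ IHy _ IHz].
- by rewrite mulr0; apply: sum_closure0.
- rewrite mulrA; apply: zprod_mem => //; first exact: (zideal_radical_pow k.+1).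
  exact: IHk.
by rewrite mulrDr; apply: sum_closureD.
Qed.

(** * Chain conditions *)

Definition acc_on (U V : set A) := forall C : nat -> set A,
  (forall k, zideal (C k)) -> (forall k, U `<=` C k /\ C k `<=` V) ->
  (forall k, C k `<=` C k.+1) -> exists N, forall k, (N <= k)%N -> C k `<=` C N.

Lemma acc_on_refl U : acc_on U U.
Proof.
by move=> C _ UCU _; exists 0%N => k _ x /(UCU k).2; apply: (UCU 0%N).1.
Qed.

Lemma acc_on_sub U V V' : V' `<=` V -> acc_on U V -> acc_on U V'.
Proof.
move=> V'V accV C idC UCV'; apply: accV => // k.
by have [UC CV'] := UCV' k; split=> //; apply: subset_trans V'V.
Qed.

Lemma acc_on_trans U V W : zideal V -> zideal W -> U `<=` V -> V `<=` W ->
  acc_on U V -> acc_on V W -> acc_on U W.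
Proof.
move=> idV idW UV VW accUV accVW C idC UCW Cup.
have [N1 CVN1] := accUV (fun k => C k `&` V) (fun k => zidealI (idC k) idV)
  (fun k => conj (fun x Ux => conj ((UCW k).1 x Ux) (UV x Ux)) (@subIsetr _ _ _))
  (fun k x '(conj Ckx Vx) => conj (Cup k x Ckx) Vx).
have [N2 CVN2] := accVW (fun k => ideal_add (C k) V) (fun k => zideal_add (idC k) idV)
  (fun k => conj (ideal_addr (idC k)) (ideal_add_sub idW (UCW k).2 VW))
  (fun k => image2_subset (Cup k) (@subset_refl _ V)).
have Cle := chain_le Cup.
exists (maxn N1 N2) => k; rewrite geq_max => /andP[N1k N2k] x Ckx.
have [a Ca [b Vb xE]] := CVN2 k N2k x (ideal_addl idV Ckx).
have Ckb : C k b.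
  rewrite -(addKr a b) xE; apply: zidealD; [exact: idC | | exact: Ckx].
  by apply: zidealN => //; apply: Cle _ _ N2k _ Ca.
rewrite -xE; apply: zidealD => //; first exact: Cle _ _ (leq_maxr _ _) _ Ca.
by have [CN1b _] := CVN1 k N1k b (conj Ckb Vb); apply: Cle _ _ (leq_maxl _ _) _ CN1b.
Qed.

Lemma atom_capI I W Q : zideal W -> zideal Q -> I `<=` W -> I `<=` Q -> atom I Q ->
  ~ Q `<=` W -> W `&` Q `<=` I.
Proof.
move=> idW idQ IW IQ aIQ nQW.
have [//|QWQ] := aIQ _ (zidealI idW idQ) (fun x Ix => conj (IW x Ix) (IQ x Ix)) (@subIsetr _ _ _).
by case: nQW => x /QWQ [].
Qed.

Lemma acc_on_atom I W Q : zideal W -> zideal Q -> I `<=` W -> I `<=` Q ->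
  atom I Q -> acc_on W (ideal_add W Q).
Proof.
move=> idW idQ IW IQ aIQ C idC WCQ Cup; have Cle := chain_le Cup.
have [[k0 QC]|nQC] := pselect (exists k, Q `<=` C k).
  exists k0 => k _ x /(WCQ k).2 [a Wa [b Qb <-]].
  by apply: zidealD => //; [apply: (WCQ k0).1 | apply: QC].
exists 0%N => k _ x Ckx; have [a Wa [b Qb xE]] := (WCQ k).2 x Ckx.
have Ib : I b.
  apply: (atom_capI (idC k) idQ) => //; first by apply: subset_trans (WCQ k).1.
    by move=> QCk; apply: nQC; exists k.
  split=> //; rewrite -(addKr a b) xE.
  by apply: zidealD => //; apply: zidealN => //; apply: (WCQ k).1.
by rewrite -xE; apply: zidealD => //; apply: (WCQ 0%N).1; [|apply: IW].
Qed.

Definition zideal_dcc := forall K : nat -> set A, (forall k, zideal (K k)) ->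
  (forall k, K k.+1 `<=` K k) -> exists N, forall k, (N <= k)%N -> K N `<=` K k.

Section DescendingChainCondition.
Hypothesis dccZ : zideal_dcc.

Lemma exists_minimal_zideal (P : set (set A)) K0 : zideal K0 -> P K0 ->
  exists M, [/\ zideal M, P M & forall K, zideal K -> P K -> K `<=` M -> M `<=` K].
Proof.
move=> idK0 PK0; apply: contrapT => nomin.
have step M : exists K, zideal M -> P M -> [/\ zideal K, P K, K `<=` M & ~ M `<=` K].
  have [[idM PM]|nMP] := pselect (zideal M /\ P M); last by exists M => idM PM; case: nMP.
  apply: contrapT => noK; apply: nomin; exists M; split=> // K idK PK KM.
  by apply: contrapT => nMK; apply: noK; exists K.
have [f fP] := choice step; pose K k := iter k f K0.
have KP k : zideal (K k) /\ P (K k).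
  by elim: k => [|k [idK PK]] //=; have [] := fP _ idK PK.
have Kdesc k : K k.+1 `<=` K k by have [] := fP _ (KP k).1 (KP k).2.
have [N KN] := dccZ (fun k => (KP k).1) Kdesc.
by have [_ _ _] := fP _ (KP N).1 (KP N).2; apply; exact: (KN N.+1 (leqnSn N)).
Qed.

Lemma exists_atom_over_radical K : zideal K -> radical `<=` K -> ~ K `<=` radical ->
  exists T, [/\ zideal T, radical `<=` T, T `<=` K, ~ T `<=` radical & atom radical T].
Proof.
move=> idK JK nKJ.
pose P T := [/\ radical `<=` T, T `<=` K & ~ T `<=` radical].
have [T [idT [JT TK nTJ] Tmin]] :=
  @exists_minimal_zideal P K idK (And3 JK (@subset_refl _ K) nKJ).
exists T; split=> // W idW JW WT; have [|nWJ] := pselect (W `<=` radical); first by left.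
by right; apply: Tmin => //; split=> //; apply: subset_trans TK.
Qed.

Lemma semisimple_mod_radical :
  exists2 ys, (forall y, y \in ys -> simple_mod_radical y) & principal_sum radical ys 1.
Proof.
pose P K := radical `<=` K /\
  exists2 ys, (forall y, y \in ys -> simple_mod_radical y) & principal_sum K ys 1.
have PT : P cycles by split; [apply: radical_sub_cycles | exists [::]; last exact: cycles1].
have [K0 [idK0 [JK0 [ys ys_simple K0ys1]] K0min]] := exists_minimal_zideal zidealT PT.
have [K0J|nK0J] := pselect (K0 `<=` radical).
  by exists ys => //; apply: principal_sumS K0J _ K0ys1.
(* Otherwise an idempotent e modulo J inside K0 shrinks K0 to K0 (1 - e) + J. *)
have [T [idT JT TK0 nTJ aT]] := exists_atom_over_radical idK0 JK0 nK0J.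
have [e [Te Ge nJe Jee]] := exists_idempotent_mod_radical idT JT nTJ aT.
have [K' [idK' JK' K'K0 K0K' nK'e]] :=
  exists_idempotent_complement idK0 JK0 (TK0 e Te) Ge nJe Jee.
case: nK'e; apply: (K0min K') => //; last exact: TK0.
split=> //; exists (e :: ys); last exact: principal_sum_pull K0K' _ K0ys1.
move=> y; rewrite inE => /predU1P[->|/ys_simple //].
have ze := zideal_sub_cycles idT Te.
by split=> //; [exists 0 | rewrite -(atom_radical_principal idT JT aT Te Ge nJe)].
Qed.

Lemma radical_nilpotent : exists n, radical_pow n `<=` [set 0].
Proof.
have [N powN] := dccZ zideal_radical_pow radical_pow_succ.
exists N => z Nz; apply: contrapT => z0.
(* With J^N = J^N J, a minimal L such that J^N L <> 0 is L = J y for a homogeneous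
   y in L; then y \in J y and Nakayama gives y = 0. *)
pose P L := exists z l, [/\ radical_pow N z, L l & z * l <> 0].
have PT : P cycles by exists z, 1; rewrite mulr1; split=> //; apply: cycles1.
have [L [idL [z1 [l [Nz1 Ll z1l0]]] Lmin]] := exists_minimal_zideal zidealT PT.
have [m [k x0]] : exists m k, hcomp m z1 * hcomp k l <> 0.
  apply: contrapT => all0; apply: z1l0.
  rewrite (hcomp_sum z1) (hcomp_sum l) mulr_suml; apply: big1 => m _.
  rewrite mulr_sumr; apply: big1 => k _; apply: contrapT => x0.
  by apply: all0; exists m, k.
set x := hcomp m z1 in x0; set y := hcomp k l in x0.
have hy : homog y by exists k; apply: hcomp_homog.
have Ly : L y by apply: zideal_hcomp.
have zy := zideal_sub_cycles idL Ly.
have [p [j [Np Jj pjy0]]] : exists p j, [/\ radical_pow N p, radical j & p * (j * y) <> 0].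
  apply: contrapT => all0; apply: x0.
  have : radical_pow N.+1 x.
    by apply: (powN N.+1 (leqnSn N)); apply: (zideal_hcomp (zideal_radical_pow N)).
  elim=> [|_ [p [Np _] [j [Jj _] <-]]|u v _ IHu _ IHv].
  - by rewrite mul0r.
  - by rewrite -mulrA; apply: contrapT => pjy0; apply: all0; exists p, j.
  by rewrite mulrDl IHu IHv addr0.
have idJy := zideal_mulr zideal_radical hy zy.
have JyL : [set b * y | b in radical] `<=` L.
  by move=> _ [b /radical_sub_cycles zb <-]; apply: zidealMl.
have [|b Jb yE] := Lmin _ idJy _ JyL y Ly; first by exists p, (j * y); split=> //; exists j.
by apply: x0; rewrite (radical_nakayama hy zy Jb (esym yE)) mulr0.
Qed.

Lemma exists_atom_outside I I' W : zideal I -> zideal I' -> zideal W ->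
    (forall j x, radical j -> I' x -> I (j * x)) ->
    I `<=` W -> W `<=` I' -> ~ I' `<=` W ->
  exists Q, [/\ zideal Q, I `<=` Q, Q `<=` I', atom I Q & ~ Q `<=` W].
Proof.
move=> idI idI' idW JI'I IW WI' /existsNP [x /not_implyP [I'x nWx]].
have [n nWc] : exists n, ~ W (hcomp n x).
  by apply/existsNP => Wx; apply: nWx; apply: zideal_of_hcomp.
set c := hcomp n x in nWc.
have I'c : I' c by apply: zideal_hcomp.
have hc : homog c by exists n; apply: hcomp_homog.
have zc := zideal_sub_cycles idI' I'c.
have [ys ys_simple ys1] := semisimple_mod_radical.
(* Multiplying 1 \in J + Z y_1 + ... + Z y_n by c gives c \in I + Z (y_1 c) + ... *)
have cI : principal_sum I [seq y * c | y <- ys] c.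
  by rewrite -[c in principal_sum _ _ c]mul1r; apply: principal_sum_mulr ys1 => j Jj; apply: JI'I.
have [_ /mapP[y yys ->] ycW] : exists2 y', y' \in [seq y * c | y <- ys] &
    ~ zprincipal y' `<=` W.
  apply: contrapT => noy; apply: nWc; move: cI; apply: principal_sum_sub => // y' y'in.
  by apply: contrapT => y'W; apply: noy; exists y'.
have [hy zy _] := ys_simple y yys.
have idYc : zideal (zprincipal (y * c)).
  apply: zideal_principal; last exact: cyclesM.
  by case: hy hc => [k Gy] [m Gc]; exists (k + m); apply: homogM.
exists (ideal_add (zprincipal (y * c)) I); split.
- exact: zideal_add.
- exact: ideal_addr.
- apply: ideal_add_sub => //; last exact: subset_trans WI'.
  by apply: principal_sub => //; apply: zidealMl.
- by apply: (atom_principal_mulr idI (ys_simple y yys) hc zc) => j Jj; apply: JI'I.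
by move=> QW; apply: ycW; apply: subset_trans QW; apply: ideal_addl.
Qed.

Fixpoint partial_ideal_sum (B : set A) (Q : nat -> set A) k m :=
  if m is m'.+1 then ideal_add (partial_ideal_sum B Q k m') (Q (k + m')%N) else B.

Lemma independent_atoms_stop I (W Q : nat -> set A) : zideal I ->
    (forall k, [/\ zideal (W k), zideal (Q k), I `<=` W k, I `<=` Q k & atom I (Q k)]) ->
    (forall k, W k.+1 = ideal_add (W k) (Q k)) ->
  exists k, Q k `<=` W k.
Proof.
move=> idI WQ Wsucc; apply: contrapT => /forallNP nQW.
pose P := partial_ideal_sum I Q.
(* The tails D k = I + Q k + Q (k+1) + ... descend; once they stabilise at N, Q N
   would lie in D (N+1), which meets W (N+1), hence W N, only in I. *)
have idP k m : zideal (P k m).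
  by elim: m => //= m IHm; apply: zideal_add => //; case: (WQ (k + m)%N).
have Pup k m : P k m `<=` P k m.+1 by apply: ideal_addl; case: (WQ (k + m)%N).
pose D k := \bigcup_(X in range (P k)) X.
have idD k : zideal (D k).
  apply: zideal_bigcup.
  - move=> _ _ [m _ <-] [m' _ <-].
    by have [mm'|/ltnW m'm] := leqP m m'; [left | right]; apply: chain_le.
  - by move=> _ [m _ <-] _; apply: idP.
  by exists 0; exists I; [exists 0%N | apply: zideal0].
have Pshift k m : P k.+1 m `<=` P k m.+1.
  elim: m => [|m IHm] /=; first by apply: ideal_addl; case: (WQ (k + 0)%N).
  by rewrite /P /= addSnnS; apply: image2_subset.
have Ddesc k : D k.+1 `<=` D k.
  by move=> x [_ [m _ <-] Px]; exists (P k m.+1); [exists m.+1 | apply: Pshift].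
have [N DN] := dccZ idD Ddesc.
have Wup k : W k `<=` W k.+1 by rewrite Wsucc; apply: ideal_addl; case: (WQ k).
have PW k m : P k m `<=` W (k + m)%N.
  elim: m => [|m IHm] /=; first by rewrite addn0; case: (WQ k).
  by rewrite addnS Wsucc; apply: image2_subset.
have indep m : P N.+1 m `&` W N.+1 `<=` I.
  elim: m => [|m IHm] x [] //= [p Pp [q Qq xE]] WNx.
  have [idWj idQj IWj IQj aj] := WQ (N.+1 + m)%N.
  have Iq : I q.
    apply: (atom_capI idWj idQj IWj IQj aj (nQW _)); split=> //.
    rewrite -(addKr p q) xE; apply: zidealD => //; first by apply: zidealN => //; apply: PW.
    by apply: (chain_le Wup (leq_addr m N.+1)).
  rewrite -xE; apply: zidealD => //; apply: IHm; split=> //.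
  rewrite -(addrK q p) xE; apply: zidealB => //; first by case: (WQ N.+1).
  by case: (WQ N.+1) => _ _ + _ _; apply.
have /existsNP [q /not_implyP [Qq nWq]] := nQW N.
have [_ [m _ <-] Pq] : D N.+1 q.
  by apply: DN (leqnSn N) _ _; exists (P N 1); [exists 1%N | apply: ideal_addr; rewrite ?addn0].
apply: nWq; case: (WQ N) => _ _ + _ _; apply; apply: (indep m); split=> //.
by rewrite Wsucc; apply: ideal_addr => //; case: (WQ N).
Qed.

Lemma acc_on_layer I I' : zideal I -> zideal I' -> I `<=` I' ->
  (forall j x, radical j -> I' x -> I (j * x)) -> acc_on I I'.
Proof.
move=> idI idI' II' JI'I.
have atomII : atom I I by move=> W _ _ WI; left.
have step W : exists Q, zideal W -> I `<=` W -> W `<=` I' ->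
    [/\ zideal Q, I `<=` Q, Q `<=` I', atom I Q & ~ I' `<=` W -> ~ Q `<=` W].
  have [I'W|nI'W] := pselect (I' `<=` W).
    by exists I => _ _ _; split=> // /(_ I'W).
  have [[idW [IW WI']]|nW] := pselect (zideal W /\ I `<=` W /\ W `<=` I'); last first.
    by exists I => idW IW WI'; case: nW.
  have [Q [idQ IQ QI' aQ nQW]] := exists_atom_outside idI idI' idW JI'I IW WI' nI'W.
  by exists Q.
(* Add atoms Q outside W one at a time until W reaches I'. *)
have [f fP] := choice step; pose W k := iter k (fun V => ideal_add V (f V)) I.
have Winv k : [/\ zideal (W k), I `<=` W k, W k `<=` I' & acc_on I (W k)].
  elim: k => [|k [idW IW WI' accW]] /=; first by split=> //; apply: acc_on_refl.
  have [idQ IQ QI' aQ _] := fP _ idW IW WI'.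
  split; [exact: zideal_add | exact: subset_trans (ideal_addl idQ) | exact: ideal_add_sub |].
  apply: acc_on_trans accW _ => //; [exact: zideal_add | exact: ideal_addl |].
  exact: acc_on_atom aQ.
have [k Qk] : exists k, f (W k) `<=` W k.
  apply: (independent_atoms_stop idI) => // k.
  by have [idW IW WI' _] := Winv k; have [] := fP _ idW IW WI'.
have [idW IW WI' accW] := Winv k; have [_ _ _ _ QW] := fP _ idW IW WI'.
have [I'W|nI'W] := pselect (I' `<=` W k); first exact: acc_on_sub accW.
by case: (QW nI'W).
Qed.

Lemma acc_on_cycles : acc_on [set 0] cycles.
Proof.
have [n pow_n0] := radical_nilpotent.
have -> : [set 0] = radical_pow n.
  by apply/seteqP; split=> [_ ->|//]; apply: zideal0 (zideal_radical_pow n).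
elim: n {pow_n0} => [|n IHn]; first exact: acc_on_refl.
apply: (acc_on_trans (zideal_radical_pow n) zidealT) IHn => //.
- exact: radical_pow_succ.
- exact: zideal_sub_cycles (zideal_radical_pow n).
apply: acc_on_layer; [exact: zideal_radical_pow | exact: zideal_radical_pow |
  exact: radical_pow_succ | exact: radical_pow_mull].
Qed.

End DescendingChainCondition.

(** * Acyclic dg-algebras *)

Lemma sum_closureS P P' : P `<=` P' -> sum_closure P `<=` sum_closure P'.
Proof.
move=> PP' x; elim=> [|y /PP' P'y|y z _ Py _ Pz]; last exact: sum_closureD.
  exact: sum_closure0.
exact: sum_closure_gen.
Qed.

Definition left_span (K : set A) : set A :=
  sum_closure [set a * k | a in setT & k in K `&` homog].

Lemma left_spanS K K' : K `<=` K' -> left_span K `<=` left_span K'.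
Proof. by move=> KK'; apply/sum_closureS/image2_subset => // x [/KK']. Qed.

Lemma sub_left_span K : zideal K -> K `<=` left_span K.
Proof.
move=> idK x Kx; rewrite (hcomp_sum x); apply: sum_closure_sum => n _.
apply: sum_closure_gen; exists 1 => //; exists (hcomp n x); last exact: mul1r.
by split; [apply: zideal_hcomp | exists n; apply: hcomp_homog].
Qed.

Lemma graded_of_hcomp (I : set A) : (forall n x, I x -> I (hcomp n x)) ->
  forall s f, uniq s -> (forall n, G n (f n)) ->
  I (\sum_(n <- s) f n) -> forall n, n \in s -> I (f n).
Proof.
move=> Ihcomp s f s_uniq Gf Is n ns.
by have := hcomp_unique s_uniq Gf (erefl _) n; rewrite ns => <-; apply: Ihcomp.
Qed.

Lemma dg_ideal_hcomp I n x : is_dg_ideal G d I -> I x -> I (hcomp n x).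
Proof.
case=> [[I0 _] _ _ Igraded _] Ix; have [ns|ns] := boolP (n \in hsupp x).
  by apply: (Igraded _ _ (hsupp_uniq x) (hcomp_homog^~ x)) => //; rewrite -hcomp_sum.
by rewrite hcomp_notin_supp.
Qed.

Lemma zideal_dg_cycles I : is_dg_ideal G d I -> zideal (I `&` cycles).
Proof.
move=> dgI; have [[I0 ID] _ IM _ _] := dgI; split.
- by split=> //; apply: cycles0.
- by move=> x y [Ix zx] [Iy zy]; split; [apply: ID | apply: cyclesD].
- by move=> a x za [Ix zx]; split; [apply: IM | apply: cyclesM].
- by move=> n x [Ix zx]; split; [apply: dg_ideal_hcomp | apply: cycles_hcomp].
by move=> x [].
Qed.

Lemma dg_ideal_left_span K : zideal K -> is_dg_ideal G d (left_span K).
Proof.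
move=> idK.
have LM a : left_span K `<=` left_span K \o *%R a.
  move=> x; apply: sum_closure_map => [||_ [b _ [k Kk <-]]]; [exact: mulr0 | exact: mulrDr |].
  by apply: sum_closure_gen; exists (a * b) => //; exists k; rewrite ?mulrA.
split.
- by split; [apply: sum_closure0 | apply: sum_closureD].
- by move=> r x /(LM (r *: 1)) /=; rewrite -scalerAl mul1r.
- by move=> a x /(LM a).
- apply: graded_of_hcomp => n x; apply: sum_closure_map => [||_ [b _ [k [Kk [e Gk]] <-]]].
  + exact: hcomp0.
  + exact: hcompD.
  apply: sum_closure_gen; exists (hcomp (n - e) b) => //.
  by exists k; [split; last exists e | rewrite (hcomp_mulr _ _ Gk)].
move=> x; apply: sum_closure_map => [||_ [b _ [k [Kk hk] <-]]].
- exact: linear0.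
- exact: linearD.
apply: sum_closure_gen; exists (d b) => //; exists k => //.
by rewrite d_mulr_cycle //; apply: zideal_sub_cycles Kk.
Qed.

Section Acyclic.
Hypothesis acyclic : dg_acyclic d.

Lemma exists_contraction : exists2 h, G (-1) h & d h = 1.
Proof.
have [y y1] := (acyclic 1).1 d1.
exists (hcomp (-1) y); first exact: hcomp_homog.
by have := hcomp_d 0 y; rewrite -y1 (hcomp_id homog1) sub0r => <-.
Qed.

Lemma d_mul_contraction h x : G (-1) h -> d h = 1 -> d (h * x) = x - h * d x.
Proof. by move=> Gh dh; rewrite (d_mul _ Gh) dh mul1r /= expr1 mulN1r. Qed.

Lemma cycles_left_span K : zideal K -> left_span K `&` cycles `<=` K.
Proof.
move=> idK x [Kx zx]; have [h Gh dh] := exists_contraction.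
have dhK y : left_span K y -> K (d (h * y)).
  elim=> [|_ [a _ [k [Kk _] <-]]|u v _ Ku _ Kv].
  - by rewrite mulr0 linear0; apply: zideal0.
  - rewrite mulrA d_mulr_cycle; last exact: zideal_sub_cycles Kk.
    by apply: zidealMl => //; apply: cycles_d.
  by rewrite mulrDr linearD; apply: zidealD.
by have := dhK x Kx; rewrite d_mul_contraction // zx mulr0 subr0.
Qed.

Lemma zideal_dcc_of_artinian : dg_artinian G d -> zideal_dcc.
Proof.
move=> artinian K idK Kdesc.
have [N LN] := artinian (fun k => left_span (K k)) (fun k => dg_ideal_left_span (idK k))
  (fun k => left_spanS (Kdesc k)).
exists N => k Nk x KNx; apply: cycles_left_span => //.
split; last exact: zideal_sub_cycles KNx.
by apply/(LN k Nk); apply: sub_left_span.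
Qed.

Lemma dg_noetherian_of_acc : acc_on [set 0] cycles -> dg_noetherian G d.
Proof.
move=> acc I dgI Iup; have [h Gh dh] := exists_contraction.
have idZ k := zideal_dg_cycles (dgI k).
have bounds k : [set 0] `<=` I k `&` cycles /\ I k `&` cycles `<=` cycles.
  by split=> [_ ->|x []//]; apply: zideal0 (idZ k).
have Zup k : I k `&` cycles `<=` I k.+1 `&` cycles.
  by move=> x [Ikx zx]; split=> //; apply: Iup.
have [N ZN] := acc _ idZ bounds Zup.
exists N => k Nk x; split; last exact: chain_le Iup _ _ Nk x.
move=> Ikx; have [_ _ IM _ Id] := dgI k; have [[_ IDN] _ IMN _ _] := dgI N.
(* x = d (h x) + h (d x), where d (h x) and d x are cycles of I k. *)
rewrite -(subrK (h * d x) x) -d_mul_contraction //; apply: IDN.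
  by have [] := ZN k Nk (d (h * x)) (conj (Id _ (IM _ _ Ikx)) (cycles_d _)).
by apply: IMN; have [] := ZN k Nk (d x) (conj (Id _ Ikx) (cycles_d _)).
Qed.

End Acyclic.
End Differential.
End Grading.

Theorem theorem2p7 (R : comPzRingType) (A : algType R)
    (G : int -> A -> Prop) (d : {linear A -> A}) :
  is_dg_algebra G d -> dg_acyclic d -> dg_artinian G d -> dg_noetherian G d.
Proof.
case=> gradedG d_homog dK d_mul acyclic artinian.
have dccZ : zideal_dcc gradedG d by apply: zideal_dcc_of_artinian.
have accZ : acc_on gradedG d [set 0] (cycles d) by apply: acc_on_cycles.
by apply: dg_noetherian_of_acc.
Qed.
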